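(* Let $G$ be a Polish group, $X$ a Polish space with a continuous $G$-action, and $F\subseteq E^X_G$ a Borel equivalence relation on $X$ such that each $E^X_G$-class contains at most countably many $F$-classes. Then there is a Borel $G$-lg comeager set $C\subseteq X$ such that $G(x,C\cap[x]_F)$ is relatively open in $G(x,C)$ for every $x\in C$; equivalently, for every $x\in C$ there is an open neighbourhood $V\subseteq G$ of $1_G$ with $V\cdot x\cap C\subseteq[x]_F$.
   Context: $E^X_G=\{(x,y):\exists g\in G\ g\cdot x=y\}$; $[x]_F$ is the $F$-class of $x$. For $x\in X$, $A\subseteq X$, $G(x,A)=\{g\in G:g\cdot x\in A\}$. A set $C\subseteq X$ is $G$-lg comeager if $G\setminus G(x,C)$ is meager in $G$ for every $x\in X$. *)

From Stdlib Require Import Reals.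
Open Scope R_scope.

Definition topo (X : Type) := (X -> Prop) -> Prop.

Definition is_metric {X : Type} (d : X -> X -> R) : Prop :=
  (forall x y, 0 <= d x y) /\
  (forall x y, d x y = 0 <-> x = y) /\
  (forall x y, d x y = d y x) /\
  (forall x y z, d x z <= d x y + d y z).

Definition metric_open {X : Type} (d : X -> X -> R) (U : X -> Prop) : Prop :=
  forall x, U x -> exists eps, 0 < eps /\ forall y, d x y < eps -> U y.

Definition metric_cauchy {X : Type} (d : X -> X -> R) (u : nat -> X) : Prop :=
  forall eps, 0 < eps -> exists N, forall m n, (N <= m)%nat -> (N <= n)%nat ->
    d (u m) (u n) < eps.

Definition metric_converges {X : Type} (d : X -> X -> R) (u : nat -> X) (l : X) : Prop :=
  forall eps, 0 < eps -> exists N, forall n, (N <= n)%nat -> d (u n) l < eps.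

Definition metric_complete {X : Type} (d : X -> X -> R) : Prop :=
  forall u, metric_cauchy d u -> exists l, metric_converges d u l.

Definition metric_separable {X : Type} (d : X -> X -> R) : Prop :=
  exists s : nat -> X, forall x eps, 0 < eps -> exists n, d x (s n) < eps.

Definition polish {X : Type} (T : topo X) : Prop :=
  exists d : X -> X -> R, is_metric d /\ metric_complete d /\ metric_separable d /\
    forall U, T U <-> metric_open d U.

Definition prod_topo {A B : Type} (TA : topo A) (TB : topo B) : topo (A * B) :=
  fun W => forall p, W p -> exists U V, TA U /\ TB V /\ U (fst p) /\ V (snd p) /\
    forall a b, U a -> V b -> W (a, b).

Definition continuous {A B : Type} (TA : topo A) (TB : topo B) (f : A -> B) : Prop :=
  forall V, TB V -> TA (fun a => V (f a)).

Definition is_group {G : Type} (mul : G -> G -> G) (inv : G -> G) (e : G) : Prop :=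
  (forall a b c, mul a (mul b c) = mul (mul a b) c) /\
  (forall a, mul e a = a /\ mul a e = a) /\
  (forall a, mul (inv a) a = e /\ mul a (inv a) = e).

Definition polish_group {G : Type} (TG : topo G) (mul : G -> G -> G) (inv : G -> G) (e : G) : Prop :=
  is_group mul inv e /\ polish TG /\
  continuous (prod_topo TG TG) TG (fun p => mul (fst p) (snd p)) /\
  continuous TG TG inv.

Definition continuous_action {G X : Type} (TG : topo G) (TX : topo X)
    (mul : G -> G -> G) (e : G) (act : G -> X -> X) : Prop :=
  (forall x, act e x = x) /\
  (forall g h x, act (mul g h) x = act g (act h x)) /\
  continuous (prod_topo TG TX) TX (fun p => act (fst p) (snd p)).

Inductive borel {X : Type} (T : topo X) : (X -> Prop) -> Prop :=
  | borel_open U : T U -> borel T U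
  | borel_compl A : borel T A -> borel T (fun x => ~ A x)
  | borel_cunion (A : nat -> X -> Prop) :
      (forall n, borel T (A n)) -> borel T (fun x => exists n, A n x)
  | borel_ext A B : borel T A -> (forall x, A x <-> B x) -> borel T B.

Definition nowhere_dense {X : Type} (T : topo X) (N : X -> Prop) : Prop :=
  forall U, T U -> (exists x, U x) ->
    exists V, T V /\ (exists x, V x) /\ (forall x, V x -> U x) /\ (forall x, V x -> ~ N x).

Definition meager {X : Type} (T : topo X) (A : X -> Prop) : Prop :=
  exists N : nat -> X -> Prop, (forall n, nowhere_dense T (N n)) /\
    forall x, A x -> exists n, N n x.

Definition orbit_rel {G X : Type} (act : G -> X -> X) (x y : X) : Prop :=
  exists g, act g x = y.

Definition Gset {G X : Type} (act : G -> X -> X) (x : X) (A : X -> Prop) : G -> Prop :=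
  fun g => A (act g x).

Definition lg_comeager {G X : Type} (TG : topo G) (act : G -> X -> X) (C : X -> Prop) : Prop :=
  forall x, meager TG (fun g => ~ Gset act x C g).

Definition rel_open {Y : Type} (T : topo Y) (A B : Y -> Prop) : Prop :=
  exists U, T U /\ forall y, B y -> (A y <-> U y).

Definition equivalence {X : Type} (F : X -> X -> Prop) : Prop :=
  (forall x, F x x) /\ (forall x y, F x y -> F y x) /\
  (forall x y z, F x y -> F y z -> F x z).

(* Let [C] be the set of points [y] such that [G(y, [y]_F)] is comeager in some
   neighbourhood of [1_G].

   [C] is Borel by a Montgomery-type induction: for a Borel [W] in [X * G] and a
   basic open [U] of [G], "the section [W_x] is comeager in [U]" can be rewritten,
   using the Baire category theorem, through countably many such conditions on the
   pieces [W] is built from.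

   [C] is lg comeager: for fixed [x], the [g] with [g x] in a fixed [F]-class
   [[z]_F] form a Borel set, hence one with the Baire property, which is therefore
   comeager near all of its points outside a meager set.  By right translation,
   [G(x, [z]_F)] comeager near [g] and [g x F z] give [g x] in [C].  As the orbit
   of [x] meets only countably many [F]-classes, the [g] with [g x] outside [C]
   form a meager set.

   Relative openness: for [x] in [C], take the open set of [g] near which
   [G(x, [x]_F)] is comeager.  If [g x] is in [C], then [G(x, [g x]_F)] is
   comeager near [g], and two sets comeager near the same point of a Baire space
   meet; so [g] lies in that open set iff [x F g x]. *)

From Stdlib Require Import Reals Lra Lia Classical ClassicalEpsilon Cantor.

Definition topo_inter {Y : Type} (T : topo Y) : Prop :=
  forall U V, T U -> T V -> T (fun y => U y /\ V y).

(* Equivalently: arbitrary unions of open sets are open. *)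
Definition topo_local {Y : Type} (T : topo Y) : Prop :=
  forall P : Y -> Prop,
    (forall y, P y -> exists V, T V /\ V y /\ forall z, V z -> P z) -> T P.

Definition countable_base {Y : Type} (T : topo Y) (B : nat -> Y -> Prop) : Prop :=
  (forall k, T (B k)) /\
  forall U y, T U -> U y -> exists k, B k y /\ forall z, B k z -> U z.

Definition baire_space {Y : Type} (T : topo Y) : Prop :=
  forall U, T U -> (exists y, U y) -> ~ meager T U.

Definition baire_property {Y : Type} (T : topo Y) (S : Y -> Prop) : Prop :=
  exists O, T O /\ meager T (fun y => ~ (O y <-> S y)).

Section Meager.
Context {Y : Type} (T : topo Y).

Lemma meager_mono (A A' : Y -> Prop) :
  meager T A -> (forall y, A' y -> A y) -> meager T A'.
Proof. intros [N [HN Hcov]] Hsub. exists N. split; auto. Qed.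

Lemma meager_nowhere_dense (N : Y -> Prop) : nowhere_dense T N -> meager T N.
Proof. intro HN. exists (fun _ => N). split; auto. intros y Ny. now exists 0%nat. Qed.

Lemma meager_empty : meager T (fun _ => False).
Proof.
  apply meager_nowhere_dense. intros U HU [y Uy].
  exists U. repeat split; eauto.
Qed.

Lemma meager_cunion (A : nat -> Y -> Prop) :
  (forall n, meager T (A n)) -> meager T (fun y => exists n, A n y).
Proof.
  intro HA.
  destruct (choice (fun n N => (forall k, nowhere_dense T (N k)) /\
                               forall y, A n y -> exists k, N k y) HA) as [N HN].
  exists (fun m => N (fst (of_nat m)) (snd (of_nat m))). split.
  - intro m. apply HN.
  - intros y [n Hn]. destruct (proj2 (HN n) y Hn) as [k Hk].
    exists (to_nat (n, k)). now rewrite cancel_of_to.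
Qed.

Lemma meager_union (A A' : Y -> Prop) :
  meager T A -> meager T A' -> meager T (fun y => A y \/ A' y).
Proof.
  intros HA HA'.
  apply (meager_mono (fun y => exists n, match n with O => A y | S _ => A' y end)).
  - apply meager_cunion. now intros [|n].
  - intros y [H|H]; [exists 0%nat | exists 1%nat]; auto.
Qed.

End Meager.

Section BaireProperty.
Context {Y : Type} (T : topo Y).
Hypotheses (T_inter : topo_inter T) (T_local : topo_local T).

Definition exterior (O : Y -> Prop) (y : Y) : Prop :=
  exists V, T V /\ V y /\ forall z, V z -> ~ O z.

Lemma exterior_open O : T (exterior O).
Proof.
  apply T_local. intros y [V [HV [Vy HVO]]].
  exists V. repeat split; auto. intros z Vz. exists V. auto.
Qed.

Lemma nowhere_dense_boundary O :
  T O -> nowhere_dense T (fun y => ~ O y /\ ~ exterior O y).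
Proof.
  intros HO U HU [y Uy].
  destruct (classic (exists z, U z /\ O z)) as [[z [Uz Oz]] | HUO].
  - exists (fun z => U z /\ O z). repeat split; eauto.
    + intros w []; auto.
    + intros w [_ Ow] [HOw _]. auto.
  - exists U. repeat split; eauto. intros w Uw [_ Hext]. apply Hext.
    exists U. repeat split; auto. intros v Uv Ov. eauto.
Qed.

Lemma baire_property_open U : T U -> baire_property T U.
Proof.
  intro HU. exists U. split; auto.
  apply (meager_mono T _ _ (meager_empty T)). tauto.
Qed.

Lemma baire_property_compl S : baire_property T S -> baire_property T (fun y => ~ S y).
Proof.
  intros [O [HO HOS]]. exists (exterior O). split; [apply exterior_open|].
  apply (meager_mono T _ _ (meager_union T _ _ HOS (meager_nowhere_dense T _
           (nowhere_dense_boundary O HO)))).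
  intros y Hy. destruct (classic (exterior O y)) as [Ey|Ey].
  - left. pose proof Ey as [V [_ [Vy HVO]]]. specialize (HVO y Vy). tauto.
  - destruct (classic (O y)); tauto.
Qed.

Lemma baire_property_cunion (S : nat -> Y -> Prop) :
  (forall n, baire_property T (S n)) -> baire_property T (fun y => exists n, S n y).
Proof.
  intro HS.
  destruct (choice (fun n O => T O /\ meager T (fun y => ~ (O y <-> S n y))) HS)
    as [O HO].
  exists (fun y => exists n, O n y). split.
  - apply T_local. intros y [n Hn]. exists (O n). repeat split; auto.
    + apply HO.
    + intros z Hz. eauto.
  - apply (meager_mono T (fun y => exists n, ~ (O n y <-> S n y))).
    + apply meager_cunion. intro n. apply HO.
    + intros y Hy. apply NNPP. intro Hall. apply Hy.
      split; intros [n Hn]; exists n; apply NNPP; intro Hc; apply Hall; exists n; tauto.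
Qed.

Lemma borel_baire_property S : borel T S -> baire_property T S.
Proof.
  induction 1 as [U HU | A _ IH | A _ IH | A A' _ [O [HO HOA]] HAA'].
  - now apply baire_property_open.
  - now apply baire_property_compl.
  - now apply baire_property_cunion.
  - exists O. split; auto.
    apply (meager_mono _ _ _ HOA). intros y Hy. specialize (HAA' y). tauto.
Qed.

End BaireProperty.

Section BorelSets.
Context {Y : Type} (T : topo Y).
Hypothesis T_local : topo_local T.

Lemma borel_empty : borel T (fun _ => False).
Proof. apply borel_open, T_local. intros y []. Qed.

Lemma borel_full : borel T (fun _ => True).
Proof.
  apply (borel_ext _ (fun y => ~ False)); [apply borel_compl, borel_empty | tauto].
Qed.

Lemma borel_const_impl (Q : Prop) (A : Y -> Prop) :
  borel T A -> borel T (fun y => Q -> A y).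
Proof.
  intro HA. destruct (classic Q) as [q | nq].
  - apply (borel_ext _ A); tauto.
  - apply (borel_ext _ _ _ borel_full). tauto.
Qed.

Lemma borel_const_and (Q : Prop) (A : Y -> Prop) :
  borel T A -> borel T (fun y => Q /\ A y).
Proof.
  intro HA. destruct (classic Q) as [q | nq].
  - apply (borel_ext _ A); tauto.
  - apply (borel_ext _ _ _ borel_empty). tauto.
Qed.

Lemma borel_cinter (A : nat -> Y -> Prop) :
  (forall n, borel T (A n)) -> borel T (fun y => forall n, A n y).
Proof.
  intro HA. apply (borel_ext _ (fun y => ~ exists n, ~ A n y)).
  - apply borel_compl, borel_cunion. intro n. now apply borel_compl.
  - intro y. split.
    + intros Hn n. apply NNPP. intro Hc. eauto.
    + intros Hall [n Hn]. auto.
Qed.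

End BorelSets.

Lemma borel_preimage {A B : Type} (TA : topo A) (TB : topo B) (f : A -> B) :
  continuous TA TB f -> forall S, borel TB S -> borel TA (fun a => S (f a)).
Proof.
  intros Hf S HS. induction HS as [U HU | | | S S' _ IH HSS'].
  - apply borel_open. now apply Hf.
  - now apply borel_compl.
  - now apply borel_cunion.
  - apply (borel_ext _ _ _ IH). intro a. apply HSS'.
Qed.

Open Scope R_scope.

Section MetricTopology.
Context {Y : Type} (T : topo Y) (d : Y -> Y -> R).
Hypotheses (Hd : is_metric d) (HT : forall U, T U <-> metric_open d U).

Let d_self y : d y y = 0.
Proof. now apply Hd. Qed.
Let d_sym y z : d y z = d z y.
Proof. apply Hd. Qed.
Let d_tri y z w : d y w <= d y z + d z w.
Proof. apply Hd. Qed.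

Lemma metric_topo_inter : topo_inter T.
Proof.
  intros U V HU HV. apply HT in HU, HV. apply HT. intros y [Uy Vy].
  destruct (HU y Uy) as [e1 [He1 H1]], (HV y Vy) as [e2 [He2 H2]].
  exists (Rmin e1 e2). split; [now apply Rmin_pos|].
  intros z Hz. split; [apply H1 | apply H2];
    eapply Rlt_le_trans; eauto; [apply Rmin_l | apply Rmin_r].
Qed.

Lemma metric_topo_local : topo_local T.
Proof.
  intros P HP. apply HT. intros y Py. destruct (HP y Py) as [V [HV [Vy HVP]]].
  apply HT in HV. destruct (HV y Vy) as [eps [Heps H]]. eauto.
Qed.

Lemma metric_ball_open c r : T (fun y => d c y < r).
Proof.
  apply HT. intros y Hy. exists (r - d c y). split; [lra|].
  intros z Hz. pose proof (d_tri c y z). lra.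
Qed.

(* The ball around the [n]-th point of the dense sequence with radius [1/(m+1)],
   where [k] codes the pair [(n, m)]. *)
Definition rational_ball (s : nat -> Y) (k : nat) : Y -> Prop :=
  fun y => d (s (fst (of_nat k))) y < / INR (S (snd (of_nat k))).

Lemma metric_countable_base (s : nat -> Y) :
  (forall y eps, 0 < eps -> exists n, d y (s n) < eps) ->
  countable_base T (rational_ball s).
Proof.
  intro Hs. split; [intro; apply metric_ball_open|].
  intros U y HU Uy. apply HT in HU. destruct (HU y Uy) as [eps [Heps Hball]].
  destruct (archimed_cor1 (eps / 2)) as [[|m] [Hm Hm0]]; [lra | lia |].
  assert (Hr : 0 < / INR (S m)) by (apply Rinv_0_lt_compat, lt_0_INR; lia).
  destruct (Hs y _ Hr) as [n Hn].
  exists (to_nat (n, m)). unfold rational_ball. rewrite cancel_of_to. cbn [fst snd].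
  split.
  - now rewrite d_sym.
  - intros z Hz. apply Hball. pose proof (d_tri y (s n) z). lra.
Qed.

Section BaireCategory.
Variable N : nat -> Y -> Prop.
Hypothesis HN : forall n, nowhere_dense T (N n).

(* Pairs are (centre, radius); the closed ball of [q] lies in the open ball of
   [p] and misses [N n]. *)
Definition shrinks (n : nat) (p q : Y * R) : Prop :=
  0 < snd q /\ snd q <= / INR (S n) /\
  forall y, d (fst q) y <= snd q -> d (fst p) y < snd p /\ ~ N n y.

Lemma shrinks_exists n p : exists q, 0 < snd p -> shrinks n p q.
Proof.
  destruct p as [c r]. destruct (classic (0 < r)) as [Hr | Hr]; [|exists (c, r); tauto].
  destruct (HN n (fun y => d c y < r) (metric_ball_open c r)) as [V [HV [[c' Vc'] [HVr HVN]]]].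
  { exists c. now rewrite d_self. }
  apply HT in HV. destruct (HV c' Vc') as [eps [Heps HepsV]].
  assert (Hn : 0 < / INR (S n)) by (apply Rinv_0_lt_compat, lt_0_INR; lia).
  exists (c', Rmin (eps / 2) (/ INR (S n))). intros _. cbn [fst snd].
  pose proof (Rmin_l (eps / 2) (/ INR (S n))).
  split; [|split; [apply Rmin_r|]].
  - apply Rmin_pos; [lra | exact Hn].
  - intros y Hy. cbn [fst snd] in Hy. assert (Vy : V y) by (apply HepsV; lra). auto.
Qed.

Variable step : nat -> Y * R -> Y * R.
Hypothesis step_shrinks : forall n p, 0 < snd p -> shrinks n p (step n p).
Variable p0 : Y * R.
Hypothesis Hp0 : 0 < snd p0.

Fixpoint chain (k : nat) : Y * R :=
  match k with O => p0 | S k => step k (chain k) end.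

Lemma chain_pos k : 0 < snd (chain k).
Proof. induction k; [exact Hp0|]. now apply (step_shrinks k). Qed.

Lemma chain_shrinks k : shrinks k (chain k) (chain (S k)).
Proof. apply step_shrinks, chain_pos. Qed.

Lemma chain_nested k m y :
  (k <= m)%nat -> d (fst (chain m)) y < snd (chain m) -> d (fst (chain k)) y < snd (chain k).
Proof.
  induction 1 as [|m _ IH]; [auto|]. intro Hy.
  apply IH, (chain_shrinks m). lra.
Qed.

Lemma chain_center_close k m :
  (k <= m)%nat -> d (fst (chain k)) (fst (chain m)) < snd (chain k).
Proof. intro Hkm. apply (chain_nested k m); [easy|]. rewrite d_self. apply chain_pos. Qed.

Lemma chain_cauchy : metric_cauchy d (fun k => fst (chain k)).
Proof.
  intros eps Heps. destruct (archimed_cor1 (eps / 2)) as [[|K] [HK HK0]]; [lra | lia |].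
  exists (S K). intros m n Hm Hn.
  pose proof (chain_center_close (S K) m Hm). pose proof (chain_center_close (S K) n Hn).
  pose proof (d_tri (fst (chain m)) (fst (chain (S K))) (fst (chain n))).
  destruct (chain_shrinks K) as [_ [HrK _]].
  rewrite d_sym in H. lra.
Qed.

Lemma chain_limit l :
  metric_converges d (fun k => fst (chain k)) l ->
  forall k, d (fst (chain k)) l < snd (chain k) /\ ~ N k l.
Proof.
  intros Hl k. apply (chain_shrinks k). apply Rnot_lt_le. intro Hfar.
  destruct (Hl (d (fst (chain (S k))) l - snd (chain (S k)))) as [M HM]; [lra|].
  specialize (HM (max M (S k)) (Nat.le_max_l _ _)).
  pose proof (chain_center_close (S k) (max M (S k)) (Nat.le_max_r _ _)).
  pose proof (d_tri (fst (chain (S k))) (fst (chain (max M (S k)))) l). lra.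
Qed.

End BaireCategory.

Theorem metric_baire_space : metric_complete d -> baire_space T.
Proof.
  intros Hcomplete U HU [y Uy] [N [HN Hcov]].
  apply HT in HU. destruct (HU y Uy) as [r [Hr Hball]].
  destruct (choice (fun np q => 0 < snd (snd np) -> shrinks N (fst np) (snd np) q))
    as [step Hstep].
  { intros [n p]. apply shrinks_exists, HN. }
  set (step' := fun n p => step (n, p)).
  assert (Hstep' : forall n p, 0 < snd p -> shrinks N n p (step' n p))
    by (intros n p; exact (Hstep (n, p))).
  destruct (Hcomplete _ (chain_cauchy N step' Hstep' (y, r) Hr)) as [l Hl].
  pose proof (chain_limit N step' Hstep' (y, r) Hr l Hl) as Hlim.
  destruct (Hcov l) as [n Hn].
  - apply Hball, (Hlim 0%nat).
  - now apply (Hlim n).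
Qed.

End MetricTopology.

Lemma polish_structure {Y : Type} (T : topo Y) :
  polish T ->
  topo_inter T /\ topo_local T /\ (exists B, countable_base T B) /\ baire_space T.
Proof.
  intros [d [Hd [Hcomplete [[s Hs] HT]]]].
  split; [|split; [|split]].
  - exact (metric_topo_inter T d HT).
  - exact (metric_topo_local T d HT).
  - exists (rational_ball d s). exact (metric_countable_base T d Hd HT s Hs).
  - exact (metric_baire_space T d Hd HT Hcomplete).
Qed.

Definition comeager_on {Y : Type} (T : topo Y) (W S : Y -> Prop) : Prop :=
  meager T (fun y => W y /\ ~ S y).

Definition comeager_near {Y : Type} (T : topo Y) (B : nat -> Y -> Prop)
    (S : Y -> Prop) (y : Y) : Prop :=
  exists k, B k y /\ comeager_on T (B k) S.

Definition refines {Y : Type} (B : nat -> Y -> Prop) (k k' : nat) : Prop :=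
  (exists y, B k' y) /\ forall y, B k' y -> B k y.

Section ComeagerOn.
Context {Y : Type} (T : topo Y).

Lemma comeager_on_mono (W W' S S' : Y -> Prop) :
  comeager_on T W S -> (forall y, W' y -> W y) -> (forall y, S y -> S' y) ->
  comeager_on T W' S'.
Proof.
  intros HWS HW HS. apply (meager_mono T _ _ HWS). intros y [W'y HS'y]. auto.
Qed.

Lemma comeager_on_inter (W S S' : Y -> Prop) :
  comeager_on T W S -> comeager_on T W S' -> comeager_on T W (fun y => S y /\ S' y).
Proof.
  intros HS HS'. apply (meager_mono T _ _ (meager_union T _ _ HS HS')).
  intros y [Wy HSS']. destruct (classic (S y)); tauto.
Qed.

Lemma comeager_on_nonempty (W S : Y -> Prop) :
  baire_space T -> T W -> (exists y, W y) -> comeager_on T W S -> exists y, W y /\ S y.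
Proof.
  intros Hbaire HW Hne HWS. apply NNPP. intro Hno. apply (Hbaire W HW Hne).
  apply (meager_mono T _ _ HWS). intros y Wy. split; eauto.
Qed.

End ComeagerOn.

Section BaireInterior.
Context {Y : Type} (T : topo Y) (B : nat -> Y -> Prop).
Hypotheses (T_inter : topo_inter T) (T_local : topo_local T)
  (HB : countable_base T B) (Hbaire : baire_space T).

Let B_open k : T (B k) := proj1 HB k.
Let B_base U y : T U -> U y -> exists k, B k y /\ forall z, B k z -> U z := proj2 HB U y.

Lemma comeager_on_refines k k' S :
  refines B k k' -> comeager_on T (B k) S -> exists y, B k' y /\ S y.
Proof.
  intros [Hne Hsub] HS. apply (comeager_on_nonempty T); auto.
  apply (comeager_on_mono T _ _ _ _ HS); auto.
Qed.

Lemma meager_inter_iff (S W : Y -> Prop) :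
  baire_property T S -> T W ->
  (meager T (fun y => W y /\ S y) <->
   forall k, (exists y, B k y) -> (forall y, B k y -> W y) -> ~ comeager_on T (B k) S).
Proof.
  intros [O [HO HOS]] HW. split.
  - intros HWS k Hne Hsub HS.
    assert (Hout : comeager_on T (B k) (fun y => ~ (W y /\ S y))).
    { apply (meager_mono T _ _ HWS). intros y [_ Hy]. now apply NNPP. }
    destruct (comeager_on_nonempty T _ _ Hbaire (B_open k) Hne
                (comeager_on_inter T _ _ _ HS Hout)) as [y [By [Sy Hy]]].
    auto.
  - intro Hno. apply (meager_mono T _ _ HOS). intros y [Wy Sy] HOy.
    assert (Oy : O y) by tauto.
    destruct (B_base (fun z => W z /\ O z) y (T_inter _ _ HW HO) (conj Wy Oy))
      as [k [Bky Hk]].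
    apply (Hno k); [eauto | intros z Bz; apply Hk, Bz |].
    apply (meager_mono T _ _ HOS). intros z [Bz HSz] HOz. apply HSz, HOz, Hk, Bz.
Qed.

Lemma comeager_on_open_iff (S : Y -> Prop) k :
  T S -> (comeager_on T (B k) S <-> forall k', refines B k k' -> exists y, B k' y /\ S y).
Proof.
  intro HS. split; [intros; eapply comeager_on_refines; eauto|].
  intro Hmeet. apply meager_nowhere_dense. intros U HU [y Uy].
  destruct (classic (exists z, U z /\ B k z)) as [[z [Uz Bz]] | HUB].
  - destruct (B_base _ z (T_inter _ _ HU (B_open k)) (conj Uz Bz)) as [k' [Bk'z Hk']].
    destruct (Hmeet k') as [w [Bw Sw]].
    { split; eauto. intros v Bv. apply Hk', Bv. }
    exists (fun v => B k' v /\ S v). repeat split; eauto.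
    + intros v [Bv _]. apply Hk', Bv.
    + intros v [_ Sv] [_ HSv]. auto.
  - exists U. repeat split; eauto. intros v Uv [Bv _]. eauto.
Qed.

Lemma comeager_on_compl_iff (S : Y -> Prop) k :
  baire_property T S ->
  (comeager_on T (B k) (fun y => ~ S y) <->
   forall k', refines B k k' -> ~ comeager_on T (B k') S).
Proof.
  intro HS. unfold comeager_on at 1.
  assert (Hnn : meager T (fun y => B k y /\ ~ ~ S y) <-> meager T (fun y => B k y /\ S y)).
  { split; intro H; apply (meager_mono T _ _ H); intros y [Hy HSy]; split; auto.
    now apply NNPP. }
  rewrite Hnn, (meager_inter_iff S (B k) HS (B_open k)). unfold refines. split.
  - intros H k' [Hne Hsub]. auto.
  - intros H k' Hne Hsub. auto.
Qed.

Lemma comeager_on_cunion_iff (S : nat -> Y -> Prop) k :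
  (forall n, baire_property T (S n)) ->
  (comeager_on T (B k) (fun y => exists n, S n y) <->
   forall k', refines B k k' -> exists n k'', refines B k' k'' /\ comeager_on T (B k'') (S n)).
Proof.
  intro HS. split.
  - intros HU k' [Hne Hsub]. apply NNPP. intro Hno.
    assert (Hmeager : forall n, meager T (fun y => B k' y /\ S n y)).
    { intro n. apply (meager_inter_iff _ _ (HS n) (B_open k')).
      intros k'' Hne'' Hsub'' HSk''. apply Hno. exists n, k''. now repeat split. }
    apply (Hbaire (B k') (B_open k') Hne).
    apply (meager_mono T _ _ (meager_union T _ _ HU (meager_cunion T _ Hmeager))).
    intros y By. destruct (classic (exists n, S n y)) as [[n Sny] | HnS]; eauto.
  - intro Hrefine. unfold comeager_on.
    apply (meager_inter_iff (fun y => ~ exists n, S n y) (B k)); auto.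
    { now apply baire_property_compl, baire_property_cunion. }
    intros k' Hne Hsub Hnot.
    destruct (Hrefine k' (conj Hne Hsub)) as [n [k'' [Hk'' HSn]]].
    assert (Hnot'' : comeager_on T (B k'') (fun y => ~ exists n, S n y)).
    { apply (comeager_on_mono T _ _ _ _ Hnot); auto. apply Hk''. }
    destruct (comeager_on_nonempty T _ _ Hbaire (B_open k'') (proj1 Hk'')
                (comeager_on_inter T _ _ _ HSn Hnot'')) as [y [_ [Sny HnS]]].
    eauto.
Qed.

Lemma comeager_near_open S : T (comeager_near T B S).
Proof.
  apply T_local. intros y [k [Bky Hk]]. exists (B k). repeat split; auto.
  intros z Bz. now exists k.
Qed.

Lemma comeager_near_mono (S S' : Y -> Prop) y :
  comeager_near T B S y -> (forall z, S z -> S' z) -> comeager_near T B S' y.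
Proof.
  intros [k [Bky Hk]] HSS'. exists k. split; auto.
  apply (comeager_on_mono T _ _ _ _ Hk); auto.
Qed.

Lemma meager_diff_comeager_near S :
  baire_property T S -> meager T (fun y => S y /\ ~ comeager_near T B S y).
Proof.
  intros [O [HO HOS]]. apply (meager_mono T _ _ HOS). intros y [Sy Hnear] HOSy.
  assert (Oy : O y) by tauto.
  destruct (B_base O y HO Oy) as [k [Bky Hk]]. apply Hnear. exists k. split; auto.
  apply (meager_mono T _ _ HOS). intros z [Bz HSz] HOSz. apply HSz, HOSz, Hk, Bz.
Qed.

Lemma comeager_near_meet (S S' : Y -> Prop) y :
  comeager_near T B S y -> comeager_near T B S' y -> exists z, S z /\ S' z.
Proof.
  intros [k [Bky Hk]] [k' [Bk'y Hk']].
  destruct (B_base _ y (T_inter _ _ (B_open k) (B_open k')) (conj Bky Bk'y))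
    as [k'' [Bk''y Hk'']].
  destruct (comeager_on_nonempty T _ _ Hbaire (B_open k'') (ex_intro _ y Bk''y)
    (comeager_on_inter T _ _ _
     (comeager_on_mono T _ _ _ _ Hk (fun z Bz => proj1 (Hk'' z Bz)) (fun z Sz => Sz))
     (comeager_on_mono T _ _ _ _ Hk' (fun z Bz => proj2 (Hk'' z Bz)) (fun z Sz => Sz))))
    as [z [_ HSS']].
  eauto.
Qed.

End BaireInterior.

Lemma continuous_comp {A B C : Type} (TA : topo A) (TB : topo B) (TC : topo C)
    (f : A -> B) (g : B -> C) :
  continuous TA TB f -> continuous TB TC g -> continuous TA TC (fun a => g (f a)).
Proof. intros Hf Hg W HW. exact (Hf _ (Hg W HW)). Qed.

Lemma pair_l_continuous {A B : Type} (TA : topo A) (TB : topo B) (b : B) :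
  topo_local TA -> continuous TA (prod_topo TA TB) (fun a => (a, b)).
Proof.
  intros HA W HW. apply HA. intros a Wab.
  destruct (HW (a, b) Wab) as [U [V [HU [_ [Ua [Vb HUV]]]]]].
  exists U. repeat split; auto.
Qed.

Lemma pair_r_continuous {A B : Type} (TA : topo A) (TB : topo B) (a : A) :
  topo_local TB -> continuous TB (prod_topo TA TB) (fun b => (a, b)).
Proof.
  intros HB W HW. apply HB. intros b Wab.
  destruct (HW (a, b) Wab) as [U [V [_ [HV [Ua [Vb HUV]]]]]].
  exists V. repeat split; auto.
Qed.

Section SectionsOfBorelSets.
Context {X G : Type} (TX : topo X) (TG : topo G) (B : nat -> G -> Prop).
Hypotheses (TX_local : topo_local TX) (TG_inter : topo_inter TG) (TG_local : topo_local TG)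
  (HB : countable_base TG B) (Hbaire : baire_space TG).

Lemma baire_property_section W x :
  borel (prod_topo TX TG) W -> baire_property TG (fun g => W (x, g)).
Proof.
  intro HW. apply borel_baire_property; auto.
  exact (borel_preimage _ _ _ (pair_r_continuous TX TG x TG_local) W HW).
Qed.

(* Each step of the induction on [W] is one of the characterisations of
   [comeager_on], whose right-hand sides only involve countable operations. *)
Lemma borel_comeager_on_section W :
  borel (prod_topo TX TG) W ->
  forall k, borel TX (fun x => comeager_on TG (B k) (fun g => W (x, g))).
Proof.
  induction 1 as [W HW | W HW IH | W HW IH | W W' _ IH HWW']; intro k.
  - apply (borel_ext _ (fun x => forall k', refines B k k' -> exists g, B k' g /\ W (x, g))).
    + apply borel_cinter; auto. intro k'. apply borel_const_impl; auto.
      apply borel_open, TX_local. intros x [g [Bg Wxg]].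
      destruct (HW (x, g) Wxg) as [U [V [HU [_ [Ux [Vg HUV]]]]]].
      exists U. repeat split; auto. intros x' Ux'. eauto.
    + intro x. symmetry. apply comeager_on_open_iff; auto.
      exact (pair_r_continuous TX TG x TG_local W HW).
  - apply (borel_ext _ (fun x => forall k', refines B k k' ->
                                  ~ comeager_on TG (B k') (fun g => W (x, g)))).
    + apply borel_cinter; auto. intro k'. apply borel_const_impl, borel_compl; auto.
    + intro x. symmetry. apply comeager_on_compl_iff; auto.
      now apply baire_property_section.
  - apply (borel_ext _ (fun x => forall k', refines B k k' ->
        exists n k'', refines B k' k'' /\ comeager_on TG (B k'') (fun g => W n (x, g)))).
    + apply borel_cinter; auto. intro k'. apply borel_const_impl; auto.
      apply borel_cunion. intro n. apply borel_cunion. intro k''.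
      apply borel_const_and; auto.
    + intro x. symmetry. apply (comeager_on_cunion_iff TG B TG_inter TG_local HB Hbaire
                                  (fun n g => W n (x, g))).
      intro n. now apply baire_property_section.
  - apply (borel_ext _ _ _ (IH k)). intro x.
    split; intro H; apply (comeager_on_mono TG _ _ _ _ H); auto; intro g; apply HWW'.
Qed.

Lemma borel_comeager_near_section W g0 :
  borel (prod_topo TX TG) W ->
  borel TX (fun x => comeager_near TG B (fun g => W (x, g)) g0).
Proof.
  intro HW. apply borel_cunion. intro k.
  apply borel_const_and; auto. now apply borel_comeager_on_section.
Qed.

End SectionsOfBorelSets.

Lemma nowhere_dense_homeo_preimage {Y : Type} (T : topo Y) (phi psi : Y -> Y) :
  continuous T T phi -> continuous T T psi ->
  (forall y, psi (phi y) = y) -> (forall y, phi (psi y) = y) ->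
  forall N, nowhere_dense T N -> nowhere_dense T (fun y => N (phi y)).
Proof.
  intros Hphi Hpsi Hpsiphi Hphipsi N HN U HU [y Uy].
  destruct (HN (fun z => U (psi z)) (Hpsi U HU)) as [V [HV [[z Vz] [HVU HVN]]]].
  { exists (phi y). now rewrite Hpsiphi. }
  exists (fun y => V (phi y)). repeat split.
  - now apply Hphi.
  - exists (psi z). now rewrite Hphipsi.
  - intros w Vw. rewrite <- (Hpsiphi w). auto.
  - intros w Vw. auto.
Qed.

Lemma meager_homeo_preimage {Y : Type} (T : topo Y) (phi psi : Y -> Y) :
  continuous T T phi -> continuous T T psi ->
  (forall y, psi (phi y) = y) -> (forall y, phi (psi y) = y) ->
  forall M, meager T M -> meager T (fun y => M (phi y)).
Proof.
  intros Hphi Hpsi Hpsiphi Hphipsi M [N [HN Hcov]].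
  exists (fun n y => N n (phi y)). split; [|auto].
  intro n. now apply (nowhere_dense_homeo_preimage T phi psi).
Qed.

Section RightTranslations.
Context {G : Type} (TG : topo G) (mul : G -> G -> G) (inv : G -> G) (e : G).
Hypotheses (Hgroup : is_group mul inv e)
  (Hmul : continuous (prod_topo TG TG) TG (fun p => mul (fst p) (snd p)))
  (TG_local : topo_local TG).

Lemma rtrans_continuous b : continuous TG TG (fun g => mul g b).
Proof. exact (continuous_comp _ _ _ _ _ (pair_l_continuous TG TG b TG_local) Hmul). Qed.

Lemma rtrans_cancel b g : mul (mul g b) (inv b) = g.
Proof.
  destruct Hgroup as [Hassoc [Hid Hinv]].
  rewrite <- Hassoc, (proj2 (Hinv b)). apply Hid.
Qed.

Lemma rtrans_inv_cancel b g : mul (mul g (inv b)) b = g.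
Proof.
  destruct Hgroup as [Hassoc [Hid Hinv]].
  rewrite <- Hassoc, (proj1 (Hinv b)). apply Hid.
Qed.

Lemma meager_rtrans b M : meager TG M -> meager TG (fun g => M (mul g b)).
Proof.
  apply (meager_homeo_preimage TG _ (fun g => mul g (inv b))).
  - apply rtrans_continuous.
  - apply rtrans_continuous.
  - apply rtrans_cancel.
  - apply rtrans_inv_cancel.
Qed.

Variable B : nat -> G -> Prop.
Hypothesis HB : countable_base TG B.

Lemma comeager_near_rtrans S a b :
  comeager_near TG B S (mul a b) -> comeager_near TG B (fun g => S (mul g b)) a.
Proof.
  intros [k [Bk HS]].
  destruct (proj2 HB (fun g => B k (mul g b)) a (rtrans_continuous b _ (proj1 HB k)) Bk)
    as [k' [Bk'a Hk']].
  exists k'. split; auto.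
  apply (meager_mono TG _ _ (meager_rtrans b _ HS)). intros g [Bg HSg]. auto.
Qed.

End RightTranslations.

Section OrbitClasses.
Context {G X : Type} (TG : topo G) (mul : G -> G -> G) (inv : G -> G) (e : G)
  (TX : topo X) (act : G -> X -> X) (B : nat -> G -> Prop) (F : X -> X -> Prop).
Hypotheses (Hgroup : is_group mul inv e)
  (Hmul : continuous (prod_topo TG TG) TG (fun p => mul (fst p) (snd p)))
  (TG_inter : topo_inter TG) (TG_local : topo_local TG)
  (HB : countable_base TG B) (Hbaire : baire_space TG)
  (TX_inter : topo_inter TX) (TX_local : topo_local TX)
  (Hact_mul : forall g h x, act (mul g h) x = act g (act h x))
  (Hact_cont : continuous (prod_topo TG TX) TX (fun p => act (fst p) (snd p)))
  (HFeq : equivalence F)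
  (HFbor : borel (prod_topo TX TX) (fun p => F (fst p) (snd p))).

Lemma orbit_map_continuous x : continuous TG TX (fun g => act g x).
Proof. exact (continuous_comp _ _ _ _ _ (pair_l_continuous TG TX x TG_local) Hact_cont). Qed.

Lemma act_graph_continuous :
  continuous (prod_topo TX TG) (prod_topo TX TX) (fun p => (fst p, act (snd p) (fst p))).
Proof.
  intros W HW [x g] Wxg. cbn in Wxg.
  destruct (HW _ Wxg) as [U1 [U2 [HU1 [HU2 [U1x [U2gx HU]]]]]].
  destruct (Hact_cont U2 HU2 (g, x) U2gx) as [Vg [Vx [HVg [HVx [Vgg [Vxx HV]]]]]].
  exists (fun y => U1 y /\ Vx y), Vg. repeat split; auto.
  intros y h [U1y Vxy] Vgh. apply HU; auto. apply (HV h y); auto.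
Qed.

Lemma borel_Gset_class x z : borel TG (Gset act x (F z)).
Proof.
  apply (borel_preimage _ _ _ (continuous_comp _ _ _ _ _ (orbit_map_continuous x)
           (pair_r_continuous TX TX z TX_local)) _ HFbor).
Qed.

Lemma comeager_near_Gset_act x g Z :
  comeager_near TG B (Gset act (act g x) Z) e <-> comeager_near TG B (Gset act x Z) g.
Proof.
  pose proof Hgroup as [_ [Hid Hinv]]. unfold Gset. split; intro H.
  - rewrite <- (proj2 (Hinv g)) in H.
    apply (comeager_near_rtrans TG mul inv e Hgroup Hmul TG_local B HB) in H.
    apply (comeager_near_mono TG B _ _ _ H). intros h.
    now rewrite <- Hact_mul, (rtrans_inv_cancel mul inv e Hgroup).
  - rewrite <- (proj1 (Hid g)) in H.
    apply (comeager_near_rtrans TG mul inv e Hgroup Hmul TG_local B HB) in H.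
    apply (comeager_near_mono TG B _ _ _ H). intros h. now rewrite Hact_mul.
Qed.

Definition comeager_class (y : X) : Prop := comeager_near TG B (Gset act y (F y)) e.

Lemma borel_comeager_class : borel TX comeager_class.
Proof.
  apply (borel_comeager_near_section TX TG B TX_local TG_inter TG_local HB Hbaire
           (fun p => F (fst p) (act (snd p) (fst p)))).
  exact (borel_preimage _ _ _ act_graph_continuous _ HFbor).
Qed.

Lemma comeager_class_lg_comeager :
  (forall x, exists f : nat -> X, forall y, orbit_rel act x y -> exists n, F y (f n)) ->
  lg_comeager TG act comeager_class.
Proof.
  destruct HFeq as [_ [Fsym Ftrans]].
  intros Hcount x. destruct (Hcount x) as [f Hf].
  apply (meager_mono TG _ _ (meager_cunion TG _ (fun n =>
    meager_diff_comeager_near TG B HB _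
      (borel_baire_property TG TG_inter TG_local _ (borel_Gset_class x (f n)))))).
  intros g Hg. destruct (Hf (act g x)) as [n Hn]; [now exists g|].
  exists n. split; [now apply Fsym|]. intro Hnear. apply Hg, (comeager_near_Gset_act x g).
  apply (comeager_near_mono TG B _ _ _ Hnear). intro h. unfold Gset. eauto.
Qed.

Lemma comeager_class_rel_open x :
  rel_open TG (Gset act x (fun y => comeager_class y /\ F x y)) (Gset act x comeager_class).
Proof.
  destruct HFeq as [_ [Fsym Ftrans]].
  exists (comeager_near TG B (Gset act x (F x))).
  split; [now apply comeager_near_open|].
  intros g Cg. unfold Gset in Cg |- *. apply (comeager_near_Gset_act x g) in Cg. split.
  - intros [_ Fxg]. apply (comeager_near_mono TG B _ _ _ Cg). intro h. unfold Gset. eauto.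
  - intro Hnear. split; [now apply (comeager_near_Gset_act x g)|].
    destruct (comeager_near_meet TG B TG_inter HB Hbaire _ _ _ Hnear Cg) as [h [Fxh Fgh]].
    eauto.
Qed.

End OrbitClasses.

Theorem mainTheorem8
  (G : Type) (TG : topo G) (mul : G -> G -> G) (inv : G -> G) (e : G)
  (HG : polish_group TG mul inv e)
  (X : Type) (TX : topo X) (HX : polish TX)
  (act : G -> X -> X) (Hact : continuous_action TG TX mul e act)
  (F : X -> X -> Prop)
  (HFeq : equivalence F)
  (HFbor : borel (prod_topo TX TX) (fun p => F (fst p) (snd p)))
  (HFsub : forall x y, F x y -> orbit_rel act x y)
  (HFcount : forall x, exists f : nat -> X,
      forall y, orbit_rel act x y -> exists n, F y (f n)) :
  exists C : X -> Prop,
    borel TX C /\ lg_comeager TG act C /\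
    forall x, C x ->
      rel_open TG (Gset act x (fun y => C y /\ F x y)) (Gset act x C).
Proof.
  destruct HG as [Hgroup [HGpolish [Hmul _]]].
  destruct (polish_structure TG HGpolish) as [TG_inter [TG_local [[B HB] Hbaire]]].
  destruct (polish_structure TX HX) as [TX_inter [TX_local _]].
  destruct Hact as [_ [Hact_mul Hact_cont]].
  exists (comeager_class TG e act B F). split; [|split].
  - eapply borel_comeager_class; eassumption.
  - eapply comeager_class_lg_comeager; eassumption.
  - intros x _. eapply comeager_class_rel_open; eassumption.
Qed.
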